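(* Let $E$ and $\tilde{E}$ be the right and left algebraic eigenspaces of the nonlinear eigenvalues of $P(z)$ enclosed in $\Gamma$, respectively. Then (1) $E = F \mathcal{E}$, (2) $\tilde{E} = L\tilde{\mathcal{E}}$.
   Context: Let $A_0, \ldots, A_d \in \mathbb{C}^{n\times n}$ with $A_d \neq 0$ (not necessarily invertible), and let $P(z) = \sum_{j=0}^d z^j A_j$, with $\det P(z)$ not identically zero. A number $\lambda$ is a nonlinear eigenvalue if $P(\lambda)x=0$, $\tilde{x}^*P(\lambda)=0$ for nontrivial $x,\tilde{x}\in\mathbb{C}^n$. Ordered sequences $x_0,\ldots,x_{k-1}$ and $\tilde{x}_0,\ldots,\tilde{x}_{k-1}$ in $\mathbb{C}^n$ are right and left Jordan chains of $P$ at $\lambda$ if $\sum_{l=0}^j \frac{1}{l!}P^{(l)}(\lambda)x_{j-l}=0$ and $\sum_{l=0}^j \frac{1}{l!}\tilde{x}_{j-l}^*P^{(l)}(\lambda)=0$ for $j=0,\ldots,k-1$; the right (left) algebraic eigenspace of a set of nonlinear eigenvalues is the span of all right (left) nonlinear generalized eigenvectors (members of such chains) for all eigenvalues in the set. $\Gamma$ is a positively oriented, bounded, simple, closed contour not crossing any eigenvalue. The first companion linearization is the pencil $\mathcal{A} - z\mathcal{B}\in\mathbb{C}^{nd\times nd}$, written in $d\times d$ blocks of size $n\times n$: $\mathcal{A}$ has identity blocks $I$ on the first block superdiagonal in its first $d-1$ block rows, zeros elsewhere in those rows, and last block row $[A_0, A_1, \ldots, A_{d-1}]$; $\mathcal{B}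 = \mathrm{diag}(I, \ldots, I, -A_d)$. Let $F = [I\ 0\ \cdots\ 0]\in\mathbb{C}^{n\times nd}$ and $L = [0\ \cdots\ 0\ I]\in\mathbb{C}^{n\times nd}$ (compatible block partitioning). Let $\mathcal{E}$ and $\tilde{\mathcal{E}}$ denote the right and left algebraic eigenspaces of the linear pencil $z\mathcal{B}-\mathcal{A}$ associated to its eigenvalues enclosed within $\Gamma$, i.e. the ranges of the Riesz projections $\frac{1}{2\pi i}\oint_\Gamma (z\mathcal{B}-\mathcal{A})^{-1}\mathcal{B}\,dz$ and $\frac{1}{2\pi i}\oint_\Gamma (z\mathcal{B}-\mathcal{A})^{-*}\mathcal{B}^*\,dz$. For a matrix $M$ and subspace $Z$, $MZ=\{Mz: z\in Z\}$. *)

From HB Require Import structures.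
From mathcomp Require Import all_boot all_order all_algebra.
From mathcomp Require Import complex reals.
Set Implicit Arguments. Unset Strict Implicit. Unset Printing Implicit Defensive.
Import Order.TTheory GRing.Theory Num.Theory.
Local Open Scope ring_scope.

Section Defs.
Variable C : numClosedFieldType.

Definition ctr N (v : 'cV[C]_N) : 'rV[C]_N := (map_mx Num.conj v)^T.

(* Q^{(l)}(lam) / l!  for a matrix polynomial Q *)
Definition taylor N (Q : 'M[{poly C}]_N) (lam : C) (l : nat) : 'M[C]_N :=
  map_mx (fun p => (p^`N(l)).[lam]) Q.

Definition evalpm N (Q : 'M[{poly C}]_N) (lam : C) : 'M[C]_N :=
  map_mx (fun p => p.[lam]) Q.

Definition nonlinear_eigenvalue N (Q : 'M[{poly C}]_N) (lam : C) : Prop :=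
  (exists x : 'cV[C]_N, x != 0 /\ evalpm Q lam *m x = 0) /\
  (exists xt : 'cV[C]_N, xt != 0 /\ ctr xt *m evalpm Q lam = 0).

Definition right_jordan_chain N (Q : 'M[{poly C}]_N) (lam : C) (k : nat)
  (xs : nat -> 'cV[C]_N) : Prop :=
  forall j : nat, (j < k)%N ->
    \sum_(l < j.+1) taylor Q lam l *m xs (j - l)%N = 0.

Definition left_jordan_chain N (Q : 'M[{poly C}]_N) (lam : C) (k : nat)
  (xs : nat -> 'cV[C]_N) : Prop :=
  forall j : nat, (j < k)%N ->
    \sum_(l < j.+1) ctr (xs (j - l)%N) *m taylor Q lam l = 0.

Definition right_gen_eigvec N (Q : 'M[{poly C}]_N) (lam : C) (x : 'cV[C]_N) :=
  exists k (xs : nat -> 'cV[C]_N) i,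
    right_jordan_chain Q lam k xs /\ (i < k)%N /\ x = xs i.

Definition left_gen_eigvec N (Q : 'M[{poly C}]_N) (lam : C) (x : 'cV[C]_N) :=
  exists k (xs : nat -> 'cV[C]_N) i,
    left_jordan_chain Q lam k xs /\ (i < k)%N /\ x = xs i.

Definition span N (S : 'cV[C]_N -> Prop) (x : 'cV[C]_N) : Prop :=
  exists (m : nat) (v : 'I_m -> 'cV[C]_N) (c : 'I_m -> C),
    (forall i, S (v i)) /\ x = \sum_(i < m) c i *: v i.

Definition right_alg_eigenspace N (Q : 'M[{poly C}]_N) (Omega : C -> Prop) :=
  span (fun x => exists lam, Omega lam /\ nonlinear_eigenvalue Q lam /\
                             right_gen_eigvec Q lam x).

Definition left_alg_eigenspace N (Q : 'M[{poly C}]_N) (Omega : C -> Prop) :=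
  span (fun x => exists lam, Omega lam /\ nonlinear_eigenvalue Q lam /\
                             left_gen_eigvec Q lam x).

Definition matpoly n d (A : 'I_d.+1 -> 'M[C]_n) : 'M[{poly C}]_n :=
  \matrix_(r, s) \sum_(j < d.+1) (A j r s)%:P * 'X^j.

Definition companionA n d (A : 'I_d.+1 -> 'M[C]_n) : 'M[C]_(\sum_(i < d) n) :=
  \mxblock_(i < d, j < d)
    (if val i == d.-1 then A (widen_ord (leqnSn d) j)
     else if val j == (val i).+1 then 1%:M else 0 : 'M[C]_n).

Definition companionB n d (A : 'I_d.+1 -> 'M[C]_n) : 'M[C]_(\sum_(i < d) n) :=
  \mxdiag_(i < d) (if val i == d.-1 then - A ord_max else 1%:M : 'M[C]_n).

Definition pencil N (AA BB : 'M[C]_N) : 'M[{poly C}]_N :=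
  \matrix_(r, s) ('X * (BB r s)%:P - (AA r s)%:P).

Definition Fmx n d : 'M[C]_(n, \sum_(i < d) n) :=
  \mxrow_(j < d) (if val j == 0%N then 1%:M else 0 : 'M[C]_n).

Definition Lmx n d : 'M[C]_(n, \sum_(i < d) n) :=
  \mxrow_(j < d) (if val j == d.-1 then 1%:M else 0 : 'M[C]_n).

End Defs.

From Pilot Require Import Defs.
From HB Require Import structures.
From mathcomp Require Import all_boot all_order all_algebra.
From mathcomp Require Import complex reals.
Set Implicit Arguments. Unset Strict Implicit. Unset Printing Implicit Defensive.
Import Order.TTheory GRing.Theory Num.Theory.
Local Open Scope ring_scope.

(* By Taylor's formula, x_0, ..., x_(K-1) is a right Jordan chain of Q at lam exactly when
   the polynomial vector v(t) = sum_j t^j x_j satisfies Q(lam + t) v(t) = O(t^K).  The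
   pencil zB - A is tied to P(z) by the polynomial identities
     (zB - A) Z(z) = - L^T P(z),   Y(z) (zB - A) = - P(z) F,   F Z(z) = I,   Y(z) L^T = I,
   where Z(z) = [I; zI; ...; z^(d-1) I] and Y(z) = [-G_1(z), ..., -G_(d-1)(z), I] with the
   Horner tails G_k(z) = sum_(i >= k) z^(i-k) A_i.  Hence v |-> Z(lam + t) v turns chains of
   P into chains of the pencil lying over them under F, and V |-> F V turns chains of the
   pencil into chains of P.  Left chains of Q are the conjugates of right chains of Q^T, and
   the transposed identities do the same job for them with Y^T and L in the roles of Z and F.
   As F is injective on the kernel of lam B - A, P and the pencil have the same eigenvalues,
   and taking spans gives both equalities. *)

Lemma sum_ord_if_val_eq (V : nmodType) d (F : nat -> V) k :
  \sum_(j < d) (if val j == k then F j else 0) = if (k < d)%N then F k else 0.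
Proof.
case: ltnP => [lt_kd | le_dk].
  by rewrite -big_mkcond (big_pred1 (Ordinal lt_kd)) // => j; rewrite /= -val_eqE.
by rewrite big1 // => j _; case: eqP => // jk; move: (ltn_ord j); rewrite jk ltnNge le_dk.
Qed.

Lemma mxcolZ (R : pzRingType) p (p_ : 'I_p -> nat) m a (X : forall i, 'M[R]_(p_ i, m)) :
  \mxcol_i (a *: X i) = a *: \mxcol_i X i.
Proof. by apply/matrixP => r s; rewrite !mxE. Qed.

Lemma mxrowZ (R : pzRingType) q (q_ : 'I_q -> nat) m a (Y : forall j, 'M[R]_(m, q_ j)) :
  \mxrow_j (a *: Y j) = a *: \mxrow_j Y j.
Proof. by apply/matrixP => r s; rewrite !mxE. Qed.

Section Companion.
Variables (R : comPzRingType) (n d : nat).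
Local Notation N := (\sum_(i < d) n)%N.

Definition block_row k : 'M[R]_(n, N) :=
  \mxrow_(j < d) (if val j == k then 1%:M else 0 : 'M[R]_n).

Definition companion_mxA (A : 'I_d.+1 -> 'M[R]_n) : 'M[R]_N :=
  \mxblock_(i < d, j < d)
    (if val i == d.-1 then A (widen_ord (leqnSn d) j)
     else if val j == (val i).+1 then 1%:M else 0 : 'M[R]_n).

Definition companion_mxB (A : 'I_d.+1 -> 'M[R]_n) : 'M[R]_N :=
  \mxdiag_(i < d) (if val i == d.-1 then - A ord_max else 1%:M : 'M[R]_n).

Definition mxhorner (A : 'I_d.+1 -> 'M[R]_n) (z : R) : 'M[R]_n :=
  \sum_(j < d.+1) z ^+ j *: A j.

Lemma block_row_mul_mxcol m (k : 'I_d) (X : 'I_d -> 'M[R]_(n, m)) :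
  block_row k *m \mxcol_i X i = X k.
Proof.
rewrite mul_mxrow_mxcol (bigD1 k) //= eqxx mul1mx big1 ?addr0 // => i /negbTE ne_ik.
by rewrite -[_ == _]/(i == k) ne_ik mul0mx.
Qed.

Lemma mxrow_mul_tr_block_row m (k : 'I_d) (Y : 'I_d -> 'M[R]_(m, n)) :
  \mxrow_i Y i *m (block_row k)^T = Y k.
Proof.
rewrite tr_mxrow mul_mxrow_mxcol (bigD1 k) //= eqxx trmx1 mulmx1 big1 ?addr0 //.
by move=> i /negbTE ne_ik; rewrite -[_ == _]/(i == k) ne_ik trmx0 mulmx0.
Qed.

Lemma tr_block_row_mul m k (M : 'M[R]_(n, m)) :
  (block_row k)^T *m M = \mxcol_(i < d) (if val i == k then M else 0).
Proof.
rewrite tr_mxrow mxcol_mul; apply: eq_mxcol => i.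
by case: eqP; rewrite ?trmx1 ?trmx0 ?mul1mx ?mul0mx.
Qed.

Lemma mul_block_row m k (M : 'M[R]_(m, n)) :
  M *m block_row k = \mxrow_(j < d) (if val j == k then M else 0).
Proof.
by rewrite mul_mxrow; apply: eq_mxrow => j; case: eqP; rewrite ?mulmx1 ?mulmx0.
Qed.

Lemma mxcol_block_row m (M : 'M[R]_(N, m)) : \mxcol_(i < d) (block_row i *m M) = M.
Proof.
rewrite -{2}(submxcolK M); apply: eq_mxcol => i.
by rewrite -{1}(submxcolK M) block_row_mul_mxcol.
Qed.

Section Pencil.
Variables (A : 'I_d.+1 -> 'M[R]_n) (z : R).
Hypothesis d_gt0 : (0 < d)%N.
Local Notation pencil_mx := (z *: companion_mxB A - companion_mxA A).

Lemma pencil_mul_mxcol m (X : nat -> 'M[R]_(n, m)) :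
  pencil_mx *m \mxcol_(i < d) X i =
  \mxcol_(i < d) (if val i == d.-1
                  then - (z *: (A ord_max *m X i)) - \sum_(j < d) A (widen_ord (leqnSn d) j) *m X j
                  else z *: X i - X i.+1).
Proof.
rewrite mulmxBl -scalemxAl mul_mxdiag_mxcol mul_mxblock_mxrow -mxcolZ -mxcolB.
apply: eq_mxcol => i; case: eqP => [_ | ne_i].
  by rewrite mulNmx scalerN.
rewrite mul1mx; congr (_ - _).
rewrite (eq_bigr (fun j : 'I_d => if val j == i.+1 then X j else 0)); last first.
  by move=> j _; case: eqP => _; rewrite ?mul1mx ?mul0mx.
rewrite sum_ord_if_val_eq; case: ltnP => // le_d_i1.
by case: ne_i; apply/eqP; rewrite -eqSS prednK // eqn_leq ltn_ord le_d_i1.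
Qed.

Lemma mxrow_mul_pencil m (Y : nat -> 'M[R]_(m, n)) :
  \mxrow_(i < d) Y i *m pencil_mx =
  \mxrow_(j < d) (z *: (Y j *m (if val j == d.-1 then - A ord_max else 1%:M))
                  - (Y d.-1 *m A (widen_ord (leqnSn d) j) + (if val j == 0%N then 0 else Y j.-1))).
Proof.
rewrite mulmxBr -scalemxAr mul_mxrow_mxdiag mul_mxrow_mxblock -mxrowZ -mxrowB.
apply: eq_mxrow => j; congr (_ - _).
rewrite (eq_bigr (fun i : 'I_d => (if val i == d.-1 then Y i *m A (widen_ord (leqnSn d) j) else 0)
                                  + (if val j == i.+1 then Y i else 0))); last first.
  move=> i _; case: eqP => [-> | _]; last by rewrite add0r; case: eqP; rewrite ?mulmx1 ?mulmx0.
  by rewrite prednK // (ltn_eqF (ltn_ord j)) addr0.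
rewrite big_split /= (sum_ord_if_val_eq _ (fun k => Y k *m A (widen_ord (leqnSn d) j))).
rewrite prednK // leqnn; congr (_ + _).
case: j => [[|j] lt_jd] /=; first by rewrite big1.
rewrite (eq_bigr (fun i : 'I_d => if val i == j then Y i else 0)) => [|i _].
  by rewrite sum_ord_if_val_eq ltnW.
by rewrite eqSS eq_sym.
Qed.

Lemma pencil_kernel_inj_block_row0 m (X : 'M[R]_(N, m)) :
  pencil_mx *m X = 0 -> block_row 0 *m X = 0 -> X = 0.
Proof.
rewrite -{1}(mxcol_block_row X) (pencil_mul_mxcol (fun k => block_row k *m X)).
rewrite -(@mxcol0 _ _ (fun _ : 'I_d => n)) => /eq_mxcolP pencil_X X0.
have rows_X i : (i < d)%N -> block_row i *m X = 0.
  elim: i => [// | i IH] lt_i1d.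
  have := pencil_X (Ordinal (ltnW lt_i1d)); rewrite /= ifN_eq; last first.
    by rewrite neq_ltn -ltnS prednK ?lt_i1d.
  by rewrite IH ?(ltnW lt_i1d) // scaler0 sub0r => /eqP; rewrite oppr_eq0 => /eqP.
rewrite -(mxcol_block_row X).
by apply: eq_mxcol => i; rewrite rows_X.
Qed.

Definition powers_col : 'M[R]_(N, n) := \mxcol_(i < d) (z ^+ i)%:M.

Definition horner_tail k : 'M[R]_n := \sum_(i < d.+1 - k) z ^+ i *: A (inord (k + i)).

Definition horner_tails_row : 'M[R]_(n, N) :=
  \mxrow_(i < d) (if val i == d.-1 then 1%:M else - horner_tail i.+1).

Lemma horner_tailS k : (k <= d)%N -> horner_tail k = A (inord k) + z *: horner_tail k.+1.
Proof.
move=> le_kd; rewrite /horner_tail subSn // big_ord_recl addn0 expr0 scale1r subSS.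
by rewrite scaler_sumr; congr (_ + _); apply: eq_bigr => i _; rewrite scalerA -exprS addSnnS.
Qed.

Lemma horner_tail0 : horner_tail 0 = mxhorner A z.
Proof. by apply: eq_bigr => i _; rewrite add0n inord_val. Qed.

Lemma horner_tail_last : horner_tail d = A ord_max.
Proof.
rewrite horner_tailS // /horner_tail subnn big_ord0 scaler0 addr0.
by congr A; apply: val_inj; rewrite /= inordK.
Qed.

Lemma block_row0_mul_powers_col : block_row 0 *m powers_col = 1%:M.
Proof. by rewrite (block_row_mul_mxcol (Ordinal d_gt0)) expr0. Qed.

Lemma pencil_mul_powers_col :
  pencil_mx *m powers_col = - ((block_row d.-1)^T *m mxhorner A z).
Proof.
rewrite (pencil_mul_mxcol (fun k => (z ^+ k)%:M)) tr_block_row_mul -mxcolN.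
apply: eq_mxcol => i; case: eqP => [i_last | _]; last first.
  by rewrite scale_scalar_mx -exprS subrr oppr0.
rewrite /mxhorner big_ord_recr /= opprD addrC; congr (- _ - _).
  by apply: eq_bigr => j _; rewrite mul_mx_scalar.
by rewrite mul_mx_scalar scalerA -exprS i_last prednK.
Qed.

Lemma horner_tails_row_mul_tr_block_row : horner_tails_row *m (block_row d.-1)^T = 1%:M.
Proof.
have lt_d1_d : (d.-1 < d)%N by rewrite prednK.
by rewrite (mxrow_mul_tr_block_row (Ordinal lt_d1_d)) /= eqxx.
Qed.

Lemma horner_tails_row_mul_pencil : horner_tails_row *m pencil_mx = - (mxhorner A z *m block_row 0).
Proof.
rewrite (mxrow_mul_pencil (fun k => if k == d.-1 then 1%:M else - horner_tail k.+1)).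
rewrite mul_block_row -mxrowN; apply: eq_mxrow => j; rewrite eqxx mul1mx.
have -> : A (widen_ord (leqnSn d) j) = A (inord j).
  by congr A; apply: val_inj; rewrite /= inordK // ltnS ltnW.
have -> : (if j == d.-1 :> nat then 1%:M else - horner_tail j.+1) *m
          (if j == d.-1 :> nat then - A ord_max else 1%:M) = - horner_tail j.+1.
  case: eqP => [j_last | _]; last by rewrite mulmx1.
  by rewrite mul1mx j_last prednK // horner_tail_last.
case: eqP => [j0 | j_gt0].
  by rewrite -horner_tail0 (horner_tailS (leq0n d)) j0 addr0 scalerN opprD addrC.
have j_pos : (0 < j)%N by rewrite lt0n; apply/eqP.
have -> : (j.-1 == d.-1) = false.
  by rewrite -(inj_eq succn_inj) !prednK // (ltn_eqF (ltn_ord j)).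
rewrite prednK // (horner_tailS (ltnW (ltn_ord j))).
by rewrite scalerN opprB [A _ + _]addrC addrK addNr oppr0.
Qed.

End Pencil.
End Companion.

Arguments block_row {R} n d k.

Section Morphisms.
Variables (R S : comPzRingType) (f : {rmorphism R -> S}) (n d : nat).

Lemma map_block_row k : map_mx f (block_row n d k) = block_row n d k.
Proof. by apply/matrixP => r s; rewrite !mxE; case: eqP; rewrite !mxE ?rmorph_nat ?raddf0. Qed.

Lemma map_companion_mxA (A : 'I_d.+1 -> 'M[R]_n) :
  map_mx f (companion_mxA A) = companion_mxA (fun j => map_mx f (A j)).
Proof.
by apply/matrixP => r s; rewrite !mxE; do 2?case: eqP; rewrite !mxE ?rmorph_nat ?raddf0.
Qed.

Lemma map_companion_mxB (A : 'I_d.+1 -> 'M[R]_n) :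
  map_mx f (companion_mxB A) = companion_mxB (fun j => map_mx f (A j)).
Proof.
apply/matrixP => r s; rewrite !mxE; case: eqP => _; last by rewrite !mxE raddf0.
by rewrite !conform_mx_id; case: eqP; rewrite !mxE ?rmorphN ?rmorph_nat.
Qed.

End Morphisms.

Section JordanChains.
Variable C : numClosedFieldType.
Implicit Types (lam : C) (p : {poly C}).
Local Notation shift lam := (comp_poly ('X + lam%:P)).

Lemma coef_comp_poly_XaddC lam p l : (p \Po ('X + lam%:P))`_l = (p^`N(l)).[lam].
Proof.
elim/poly_ind: p l => [|p c IH] l.
  by rewrite comp_poly0 coef0 nderivn_poly0 ?size_poly0 ?horner0.
rewrite comp_poly_MXaddC mulrDr !coefD coefMX coefMC coefC; case: l => [|l] /=.
  by rewrite IH !nderivn0 hornerMXaddC add0r.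
by rewrite !IH addr0 nderivnMXaddC hornerD hornerMX.
Qed.

Definition coefmx m k (M : 'M[{poly C}]_(m, k)) j : 'M[C]_(m, k) :=
  map_mx (fun p => p`_j) M.

Lemma coefmxM m k l (M1 : 'M[{poly C}]_(m, k)) (M2 : 'M[{poly C}]_(k, l)) j :
  coefmx (M1 *m M2) j = \sum_(i < j.+1) coefmx M1 i *m coefmx M2 (j - i).
Proof.
apply/matrixP => r c; rewrite !mxE summxE coef_sum.
under eq_bigr do rewrite coefM.
by rewrite exchange_big; apply: eq_bigr => i _; rewrite !mxE; apply: eq_bigr => s _; rewrite !mxE.
Qed.

Lemma coefmx_polyCl m k l (M : 'M[C]_(m, k)) (V : 'M[{poly C}]_(k, l)) j :
  coefmx (map_mx polyC M *m V) j = M *m coefmx V j.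
Proof.
rewrite coefmxM big_ord_recl subn0 big1 ?addr0 => [|i _].
  by congr (_ *m _); apply/matrixP => r s; rewrite !mxE coefC.
by rewrite [coefmx _ _](_ : _ = 0) ?mul0mx //; apply/matrixP => r s; rewrite !mxE coefC.
Qed.

Definition vanishes_to m k K (M : 'M[{poly C}]_(m, k)) :=
  forall j, (j < K)%N -> coefmx M j = 0.

Lemma vanishes_toMl m k l K (M1 : 'M[{poly C}]_(m, k)) (M2 : 'M[{poly C}]_(k, l)) :
  vanishes_to K M2 -> vanishes_to K (M1 *m M2).
Proof.
move=> M2_K j lt_jK; rewrite coefmxM big1 // => i _.
by rewrite M2_K ?mulmx0 // (leq_ltn_trans (leq_subr _ _) lt_jK).
Qed.

Definition polyvec k K (xs : nat -> 'cV[C]_k) : 'cV[{poly C}]_k :=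
  \matrix_(r, c) \poly_(j < K) xs j r c.

Lemma coefmx_polyvec k K (xs : nat -> 'cV[C]_k) j :
  (j < K)%N -> coefmx (polyvec K xs) j = xs j.
Proof. by move=> lt_jK; apply/matrixP => r c; rewrite !mxE coef_poly lt_jK. Qed.

Lemma map_shift_polyC_mx lam m k (M : 'M[C]_(m, k)) :
  map_mx (shift lam) (map_mx polyC M) = map_mx polyC M.
Proof. by apply/matrixP => r s; rewrite !mxE comp_polyC. Qed.

Lemma right_jordan_chainP N (Q : 'M[{poly C}]_N) lam K xs (v : 'cV[{poly C}]_N) :
  (forall j, (j < K)%N -> coefmx v j = xs j) ->
  right_jordan_chain Q lam K xs <-> vanishes_to K (map_mx (shift lam) Q *m v).
Proof.
move=> v_xs.
have chainE j : (j < K)%N ->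
    \sum_(l < j.+1) taylor Q lam l *m xs (j - l)%N = coefmx (map_mx (shift lam) Q *m v) j.
  move=> lt_jK; rewrite coefmxM; apply: eq_bigr => l _.
  rewrite v_xs ?(leq_ltn_trans (leq_subr _ _) lt_jK) //; congr (_ *m _).
  by apply/matrixP => r s; rewrite !mxE coef_comp_poly_XaddC.
by split=> chain j lt_jK; [rewrite -chainE ?chain | rewrite chainE ?chain].
Qed.

Lemma right_jordan_chain1 N (Q : 'M[{poly C}]_N) lam xs :
  right_jordan_chain Q lam 1 xs <-> evalpm Q lam *m xs 0%N = 0.
Proof.
have taylor0 : taylor Q lam 0 = evalpm Q lam.
  by apply/matrixP => r s; rewrite !mxE nderivn0.
split=> [/(_ 0%N isT) | eq0 [] //]; by rewrite big_ord1 taylor0.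
Qed.

Lemma conj_mxK m k (M : 'M[C]_(m, k)) : map_mx Num.conj (map_mx Num.conj M) = M.
Proof. by apply/matrixP => r s; rewrite !mxE conjCK. Qed.

Lemma nonlinear_eigenvalueE N (Q : 'M[{poly C}]_N) lam :
  nonlinear_eigenvalue Q lam <-> exists x : 'cV[C]_N, x != 0 /\ evalpm Q lam *m x = 0.
Proof.
split=> [[] // | [x [x_neq0 Qx]]]; split; first by exists x.
have /det0P [v v_neq0 vQ] : \det (evalpm Q lam) == 0.
  rewrite -det_tr; apply/det0P; exists x^T; first by rewrite trmx_eq0.
  by rewrite -trmx_mul Qx trmx0.
exists (map_mx Num.conj v)^T; split; last by rewrite /ctr map_trmx trmxK conj_mxK.
by rewrite trmx_eq0; apply: contra v_neq0 => /eqP v0; rewrite -[v]conj_mxK v0 map_mx0.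
Qed.

Section Transfer.
Variables (m k : nat) (Q1 : 'M[{poly C}]_k) (Q2 : 'M[{poly C}]_m) (F : 'M[C]_(m, k)).
Hypothesis lift : exists Z W, map_mx polyC F *m Z = 1%:M /\ Q1 *m Z = W *m Q2.
Hypothesis descend : exists W, Q2 *m map_mx polyC F = W *m Q1.

Lemma right_jordan_chain_lift lam K xs :
  right_jordan_chain Q2 lam K xs ->
  exists ys, right_jordan_chain Q1 lam K ys /\ forall j, (j < K)%N -> F *m ys j = xs j.
Proof.
have [Z [W [FZ Q1Z]]] := lift.
move/(right_jordan_chainP _ _ (coefmx_polyvec xs)) => chain_xs.
pose V := map_mx (shift lam) Z *m polyvec K xs.
exists (coefmx V); split.
  apply/(right_jordan_chainP (v := V) _ _) => //.
  by rewrite /V mulmxA -map_mxM Q1Z map_mxM -mulmxA; apply: vanishes_toMl.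
move=> j lt_jK; rewrite -coefmx_polyCl /V mulmxA -(map_shift_polyC_mx lam).
by rewrite -map_mxM FZ map_mx1 mul1mx coefmx_polyvec.
Qed.

Lemma right_jordan_chain_descend lam K ys :
  right_jordan_chain Q1 lam K ys -> right_jordan_chain Q2 lam K (fun j => F *m ys j).
Proof.
have [W Q2F] := descend.
move/(right_jordan_chainP _ _ (coefmx_polyvec ys)) => chain_ys.
apply/(right_jordan_chainP (v := map_mx polyC F *m polyvec K ys) _ _).
  by move=> j lt_jK; rewrite coefmx_polyCl coefmx_polyvec.
rewrite mulmxA -(map_shift_polyC_mx lam) -map_mxM Q2F map_mxM -mulmxA.
exact: vanishes_toMl.
Qed.

Lemma right_gen_eigvec_transfer lam x :
  right_gen_eigvec Q2 lam x <-> exists y, right_gen_eigvec Q1 lam y /\ x = F *m y.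
Proof.
split=> [[K [xs [i [chain_xs [lt_iK ->]]]]] | [y [[K [ys [i [chain_ys [lt_iK ->]]]]] ->]]].
  have [ys [chain_ys F_ys]] := right_jordan_chain_lift chain_xs.
  by exists (ys i); split; [exists K, ys, i | rewrite F_ys].
by exists K, (fun j => F *m ys j), i; split => //; apply: right_jordan_chain_descend.
Qed.

Lemma nonlinear_eigenvalue_transfer lam :
  (forall X : 'cV[C]_k, evalpm Q1 lam *m X = 0 -> F *m X = 0 -> X = 0) ->
  nonlinear_eigenvalue Q2 lam <-> nonlinear_eigenvalue Q1 lam.
Proof.
move=> F_inj; rewrite !nonlinear_eigenvalueE.
split=> [[x [x_neq0 Qx]] | [y [y_neq0 Qy]]].
  have /right_jordan_chain_lift [ys [/right_jordan_chain1 Qys F_ys]] :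
      right_jordan_chain Q2 lam 1 (fun _ => x) by apply/right_jordan_chain1.
  exists (ys 0%N); split => //; apply: contra x_neq0 => /eqP ys0.
  by rewrite -(F_ys 0%N) // ys0 mulmx0.
have /right_jordan_chain_descend /right_jordan_chain1 QFy :
    right_jordan_chain Q1 lam 1 (fun _ => y) by apply/right_jordan_chain1.
exists (F *m y); split => //; apply: contra y_neq0 => /eqP Fy0.
by apply/eqP; apply: F_inj.
Qed.

End Transfer.

Lemma left_jordan_chain_trmx N (Q : 'M[{poly C}]_N) lam K xs ys :
  (forall j, ys j = map_mx Num.conj (xs j)) ->
  left_jordan_chain Q lam K xs <-> right_jordan_chain Q^T lam K ys.
Proof.
move=> ys_xs.
have trE j : (\sum_(l < j.+1) ctr (xs (j - l)%N) *m taylor Q lam l)^T =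
             \sum_(l < j.+1) taylor Q^T lam l *m ys (j - l)%N.
  rewrite raddf_sum /=; apply: eq_bigr => l _; rewrite trmx_mul /ctr trmxK ys_xs.
  by congr (_ *m _); apply/matrixP => r s; rewrite !mxE.
split=> chain j lt_jK; first by rewrite -trE chain ?trmx0.
by apply: trmx_inj; rewrite trE chain ?trmx0.
Qed.

Lemma left_gen_eigvec_trmx N (Q : 'M[{poly C}]_N) lam x :
  left_gen_eigvec Q lam x <-> right_gen_eigvec Q^T lam (map_mx Num.conj x).
Proof.
split=> [[K [xs [i [chain [lt_iK ->]]]]] | [K [ys [i [chain [lt_iK x_i]]]]]].
  exists K, (fun j => map_mx Num.conj (xs j)), i; split => //.
  exact/(left_jordan_chain_trmx _ _ _ (fun j => erefl)).
exists K, (fun j => map_mx Num.conj (ys j)), i; split; last by rewrite -x_i conj_mxK.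
by apply/(left_jordan_chain_trmx _ _ _ (fun j => esym (conj_mxK (ys j)))).
Qed.

Lemma left_gen_eigvec_transfer m k (Q1 : 'M[{poly C}]_k) (Q2 : 'M[{poly C}]_m)
    (F : 'M[C]_(m, k)) :
  map_mx Num.conj F = F ->
  (exists Z W, map_mx polyC F *m Z = 1%:M /\ Q1^T *m Z = W *m Q2^T) ->
  (exists W, Q2^T *m map_mx polyC F = W *m Q1^T) ->
  forall lam x, left_gen_eigvec Q2 lam x <-> exists y, left_gen_eigvec Q1 lam y /\ x = F *m y.
Proof.
move=> F_real lift descend lam x.
rewrite left_gen_eigvec_trmx (right_gen_eigvec_transfer lift descend).
have conjF y : map_mx Num.conj (F *m y) = F *m map_mx Num.conj y by rewrite map_mxM F_real.
split=> [[y [y_eig x_Fy]] | [y [y_eig ->]]].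
  exists (map_mx Num.conj y); split; first by rewrite left_gen_eigvec_trmx conj_mxK.
  by rewrite -conjF -x_Fy conj_mxK.
by exists (map_mx Num.conj y); rewrite -left_gen_eigvec_trmx conjF.
Qed.

Lemma span_mulmx m k (S : 'cV[C]_m -> Prop) (T : 'cV[C]_k -> Prop) (F : 'M[C]_(m, k)) :
  (forall x, S x <-> exists y, T y /\ x = F *m y) ->
  forall x, Defs.span S x <-> exists y, Defs.span T y /\ x = F *m y.
Proof.
move=> ST x; split=> [[l [v [c [Sv ->]]]] | [y [[l [v [c [Tv ->]]]] ->]]].
  have [u /all_and2 [Tu v_Fu]] := fin_all_exists (fun i => (ST (v i)).1 (Sv i)).
  exists (\sum_(i < l) c i *: u i); split; first by exists l, u, c.
  by rewrite mulmx_sumr; apply: eq_bigr => i _; rewrite -scalemxAr v_Fu.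
exists l, (fun i => F *m v i), c; split; first by move=> i; apply/ST; exists (v i).
by rewrite mulmx_sumr; apply: eq_bigr => i _; rewrite -scalemxAr.
Qed.

Lemma alg_eigenspace_mulmx m k (E1 E2 : C -> Prop) (G1 : C -> 'cV[C]_k -> Prop)
    (G2 : C -> 'cV[C]_m -> Prop) (F : 'M[C]_(m, k)) (Omega : C -> Prop) :
  (forall lam, E2 lam <-> E1 lam) ->
  (forall lam x, G2 lam x <-> exists y, G1 lam y /\ x = F *m y) ->
  forall x, Defs.span (fun x => exists lam, Omega lam /\ E2 lam /\ G2 lam x) x <->
    exists y, Defs.span (fun y => exists lam, Omega lam /\ E1 lam /\ G1 lam y) y /\ x = F *m y.
Proof.
move=> E12 G12; apply: span_mulmx => x.
split=> [[lam [Olam [/E12 E1lam /G12 [y [G1y ->]]]]] | [y [[lam [Olam [/E12 E2lam G1y]]] ->]]].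
  by exists y; split => //; exists lam.
by exists lam; split => //; split => //; apply/G12; exists y.
Qed.

End JordanChains.

Section CompanionLinearization.
Variables (C : numClosedFieldType) (n d : nat) (A : 'I_d.+1 -> 'M[C]_n).
Hypothesis d_gt0 : (0 < d)%N.
Local Notation Ap := (fun j => map_mx polyC (A j)).
Local Notation P := (matpoly A).
Local Notation L := (pencil (companionA A) (companionB A)).

Lemma matpolyE : P = mxhorner Ap 'X.
Proof.
apply/matrixP => r s; rewrite !mxE summxE.
by apply: eq_bigr => j _; rewrite !mxE mulrC.
Qed.

Lemma pencil_companionE : L = 'X *: companion_mxB Ap - companion_mxA Ap.
Proof.
rewrite -map_companion_mxA -map_companion_mxB.
by apply/matrixP => r s; rewrite !mxE.
Qed.

Lemma evalpm_pencil_companion lam : evalpm L lam = lam *: companionB A - companionA A.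
Proof. by apply/matrixP => r s; rewrite !mxE hornerD hornerN hornerM hornerX !hornerC. Qed.

Lemma companion_lift_Fmx :
  exists Z W, map_mx polyC (Fmx C n d) *m Z = 1%:M /\ L *m Z = W *m P.
Proof.
exists (powers_col n d 'X), (- (map_mx polyC (Lmx C n d))^T).
rewrite !map_block_row block_row0_mul_powers_col // pencil_companionE.
by rewrite pencil_mul_powers_col // matpolyE mulNmx.
Qed.

Lemma companion_descend_Fmx : exists W, P *m map_mx polyC (Fmx C n d) = W *m L.
Proof.
exists (- horner_tails_row Ap 'X).
by rewrite mulNmx pencil_companionE horner_tails_row_mul_pencil // map_block_row matpolyE opprK.
Qed.

Lemma companion_lift_Lmx :
  exists Z W, map_mx polyC (Lmx C n d) *m Z = 1%:M /\ L^T *m Z = W *m P^T.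
Proof.
exists (horner_tails_row Ap 'X)^T, (- (map_mx polyC (Fmx C n d))^T); split.
  rewrite -[map_mx polyC _]trmxK -trmx_mul map_block_row.
  by rewrite horner_tails_row_mul_tr_block_row ?trmx1.
rewrite mulNmx -!trmx_mul pencil_companionE horner_tails_row_mul_pencil //.
by rewrite matpolyE map_block_row raddfN.
Qed.

Lemma companion_descend_Lmx : exists W, P^T *m map_mx polyC (Lmx C n d) = W *m L^T.
Proof.
exists (- (powers_col n d 'X)^T).
rewrite -[map_mx polyC _]trmxK mulNmx -!trmx_mul pencil_companionE pencil_mul_powers_col //.
by rewrite matpolyE map_block_row raddfN /= opprK.
Qed.

Lemma pencil_kernel_inj_Fmx lam (X : 'cV[C]_(\sum_(i < d) n)) :
  evalpm L lam *m X = 0 -> Fmx C n d *m X = 0 -> X = 0.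
Proof. by rewrite evalpm_pencil_companion; exact: pencil_kernel_inj_block_row0. Qed.

Lemma nonlinear_eigenvalue_companion lam :
  nonlinear_eigenvalue P lam <-> nonlinear_eigenvalue L lam.
Proof.
exact (nonlinear_eigenvalue_transfer companion_lift_Fmx companion_descend_Fmx (@pencil_kernel_inj_Fmx lam)).
Qed.

End CompanionLinearization.

Theorem theorem2p1 (R : realType) (n d : nat) (A : 'I_d.+1 -> 'M[R[i]]_n)
  (Omega : R[i] -> Prop) :
  (0 < d)%N ->
  A ord_max != 0 ->
  \det (matpoly A) != 0 ->
  (forall x : 'cV[R[i]]_n,
     right_alg_eigenspace (matpoly A) Omega x <->
     exists y, right_alg_eigenspace (pencil (companionA A) (companionB A)) Omega y /\
               x = Fmx _ n d *m y) /\
  (forall x : 'cV[R[i]]_n,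
     left_alg_eigenspace (matpoly A) Omega x <->
     exists y, left_alg_eigenspace (pencil (companionA A) (companionB A)) Omega y /\
               x = Lmx _ n d *m y).
Proof.
move=> d_gt0 _ _.
split; apply: alg_eigenspace_mulmx (nonlinear_eigenvalue_companion A d_gt0) _.
  exact: (right_gen_eigvec_transfer (companion_lift_Fmx A d_gt0) (companion_descend_Fmx A d_gt0)).
exact: (left_gen_eigvec_transfer (map_block_row _ _ _ _) (companion_lift_Lmx A d_gt0)
                                 (companion_descend_Lmx A d_gt0)).
Qed.
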